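(* Let $w\in W$ be a strong minuscule element, and let $w=s_{i_1}\cdots s_{i_r}$ be any reduced expression of $w$. Then for every $i\in I$ we have $\#\{1\le p\le r \mid i_p=i\}\ge 1$; that is, every simple reflection $s_1,\dots,s_n$ appears at least once in every reduced expression of $w$.
   Context: Let $\mathfrak g$ be a finite-dimensional simple Lie algebra over $\mathbb C$ of type $\mathrm A_n$, $\mathrm B_n$, $\mathrm C_n$ or $\mathrm D_n$, with index set $I=\{1,\dots,n\}$, Cartan subalgebra $\mathfrak h$, pairing $\langle\cdot,\cdot\rangle:\mathfrak h^*\times\mathfrak h\to\mathbb C$, simple roots $\alpha_i$, simple coroots $\alpha_i^\vee$, fundamental weights $\Lambda_i$, integral weights $P=\bigoplus_{i\in I}\mathbb Z\Lambda_i$, dominant integral weights $P^+=\sum_{i\in I}\mathbb Z_{\ge0}\Lambda_i$, and Weyl group $W$ generated by the simple reflections $s_i$ in $\alpha_i$. For $\Lambda\in P$, an element $w\in W$ is called $\Lambda$-minuscule if there is a reduced expression $w=s_{i_1}\cdots s_{i_r}$ such that $\langle s_{i_{p+1}}\cdots s_{i_r}(\Lambda),\alpha_{i_p}^\vee\rangle=1$ for all $1\le p\le r$. An element $w$ is dominant minuscule if it is $\Lambda$-minuscule for some $\Lambda\in P^+$. A dominant minuscule element $w$ is called strong minuscule if there exists a unique $\Lambda\in P^+$ such that $w$ is $\Lambda$-minuscule. *)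

From mathcomp Require Import all_boot all_order all_algebra.
Set Implicit Arguments. Unset Strict Implicit. Unset Printing Implicit Defensive.
Import Order.TTheory GRing.Theory Num.Theory.
Local Open Scope ring_scope.

(* Classical Cartan types (Bourbaki labelling, indices 0..n-1 for 1..n). *)
Inductive cartan_type := TA | TB | TC | TD.

Definition valid_type (t : cartan_type) (n : nat) : bool :=
  match t with
  | TA => (1 <= n)%N | TB => (2 <= n)%N | TC => (2 <= n)%N | TD => (4 <= n)%N
  end.

Definition chain_adj (i j : nat) : bool := (i == j.+1) || (j == i.+1).

(* Cartan matrix entry a_{ij} = <alpha_i^vee, alpha_j> (0-indexed). *)
Definition cartan (t : cartan_type) (n i j : nat) : int :=
  if i == j then 2 else
  match t with
  | TA => if chain_adj i j then -1 else 0
  | TB => (* alpha_n short: a_{n,n-1} = -2 *)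
      if (i == n.-1) && (j == n.-2) then -2
      else if chain_adj i j then -1 else 0
  | TC => (* alpha_n long: a_{n-1,n} = -2 *)
      if (i == n.-2) && (j == n.-1) then -2
      else if chain_adj i j then -1 else 0
  | TD => (* chain 1 - ... - (n-1), and n attached to n-2 *)
      if (chain_adj i j && (maxn i j <= n.-2)%N)
         || ((i == (n - 3)%N) && (j == n.-1)) || ((i == n.-1) && (j == (n - 3)%N))
      then -1 else 0
  end.

(* Integral weights, in the basis of fundamental weights:
   lam i = <lam, alpha_i^vee>. *)
Definition weight (n : nat) := {ffun 'I_n -> int}.

(* simple reflection s_j(lam) = lam - <lam, alpha_j^vee> alpha_j *)
Definition sref (t : cartan_type) (n : nat) (j : 'I_n) (lam : weight n) : weight n :=
  [ffun i : 'I_n => lam i - lam j * cartan t n i j].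

Fixpoint wact (t : cartan_type) (n : nat) (s : seq 'I_n) (lam : weight n) : weight n :=
  if s is i :: s' then sref t i (wact t s' lam) else lam.

(* Two words represent the same Weyl group element iff they act identically
   on P (P spans h^dual, and W acts faithfully on h^dual). *)
Definition weq (t : cartan_type) (n : nat) (s u : seq 'I_n) : Prop :=
  forall lam : weight n, wact t s lam = wact t u lam.

Definition reduced (t : cartan_type) (n : nat) (s : seq 'I_n) : Prop :=
  forall u : seq 'I_n, weq t s u -> (size s <= size u)%N.

Definition dominant (n : nat) (lam : weight n) : Prop := forall i, 0 <= lam i.

Definition minuscule (t : cartan_type) (n : nat) (Lam : weight n) (w : seq 'I_n) : Prop :=
  exists u : seq 'I_n,
    [/\ weq t w u, reduced t u &
        forall (p : nat) (Hp : (p < size u)%N),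
          (wact t (drop p.+1 u) Lam) (tnth (in_tuple u) (Ordinal Hp)) = 1].

Definition dominant_minuscule (t : cartan_type) (n : nat) (w : seq 'I_n) : Prop :=
  exists Lam : weight n, dominant Lam /\ minuscule t Lam w.

Definition strong_minuscule (t : cartan_type) (n : nat) (w : seq 'I_n) : Prop :=
  exists Lam : weight n,
    [/\ dominant Lam, minuscule t Lam w &
        forall Lam' : weight n, dominant Lam' -> minuscule t Lam' w -> Lam' = Lam].

From mathcomp Require Import all_boot all_order all_algebra zify ring.
Set Implicit Arguments. Unset Strict Implicit. Unset Printing Implicit Defensive.
Import GRing.Theory Num.Theory.
Local Open Scope ring_scope.

(* Let Lam be the unique dominant weight for which w is minuscule and u a
   Lam-minuscule reduced word for w.  Along u every reflection s_(i_p) lowers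
   the weight by exactly alpha_(i_p), so the alpha_i-coordinate of
   Lam - w Lam is the number of letters i in u.  Cartan matrices of classical
   type are nonsingular, hence these coordinates can be computed from any word
   for w: if i is missing from s, it is missing from u as well.  But then every
   reflection in u fixes the fundamental weight Lam_i, so u is also
   (Lam + Lam_i)-minuscule, contradicting the uniqueness of Lam. *)

Definition delta (i j : int) : int := (i == j)%:Z.

Definition sparse_row (l : seq (int * int)) (j : int) : int :=
  \sum_(x <- l) x.1 * delta j x.2.

Definition sparse_dot (l : seq (int * int)) (y : int -> int) : int :=
  \sum_(x <- l) x.1 * y x.2.

Definition chain_row (k : int) : seq (int * int) := [:: (2, k); (-1, k + 1); (-1, k - 1)].

Ltac cartan_entry :=
  rewrite /cartan /chain_adj /sparse_row /chain_row !big_cons big_nil /delta /=;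
  repeat (match goal with
    | |- context[?x == ?y] => case: (x =P y) => ?
    | |- context[(?x <= ?y)%N] => case: (leqP x y) => ?
    end; rewrite /=; try (exfalso; lia)); lia.

Section CartanRows.
Variables (n k j : nat).

Lemma cartanA_row : cartan TA n k j = sparse_row (chain_row k) j.
Proof. cartan_entry. Qed.

Lemma cartanB_row : (k.+1 < n)%N -> cartan TB n k j = sparse_row (chain_row k) j.
Proof. move=> ?; cartan_entry. Qed.

Lemma cartanB_last : k.+2 = n -> (j < n)%N ->
  cartan TB n k.+1 j = sparse_row [:: (2, k%:Z + 1); (-2, k%:Z)] j.
Proof. move=> ? ?; cartan_entry. Qed.

Lemma cartanC_row : k.+2 != n -> cartan TC n k j = sparse_row (chain_row k) j.
Proof. move=> /eqP ?; cartan_entry. Qed.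

Lemma cartanC_double : k.+2 = n ->
  cartan TC n k j = sparse_row [:: (2, k%:Z); (-2, k%:Z + 1); (-1, k%:Z - 1)] j.
Proof. move=> ?; cartan_entry. Qed.

Lemma cartanD_row : (k.+3 < n)%N -> cartan TD n k j = sparse_row (chain_row k) j.
Proof. move=> ?; cartan_entry. Qed.

Lemma cartanD_branch : k.+3 = n -> (j < n)%N ->
  cartan TD n k j = sparse_row ((-1, k%:Z + 2) :: chain_row k) j.
Proof. move=> ? ?; cartan_entry. Qed.

Lemma cartanD_leaf1 : k.+3 = n ->
  cartan TD n k.+1 j = sparse_row [:: (2, k%:Z + 1); (-1, k%:Z)] j.
Proof. move=> ?; cartan_entry. Qed.

Lemma cartanD_leaf2 : k.+3 = n ->
  cartan TD n k.+2 j = sparse_row [:: (2, k%:Z + 2); (-1, k%:Z)] j.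
Proof. move=> ?; cartan_entry. Qed.

End CartanRows.

Lemma sum_delta n (f : int -> int) (c : int) :
  \sum_(j < n) delta j c * f j = if 0 <= c < n%:Z then f c else 0.
Proof.
case: ifPn => [/andP [] | c_out].
- case: c => // k _; rewrite ltz_nat => k_lt.
  rewrite (bigD1 (Ordinal k_lt)) //= /delta eqxx mul1r big1 ?addr0 // => j.
  by rewrite -val_eqE /= eqz_nat => /negbTE ->; rewrite mul0r.
- apply: big1 => j _; rewrite /delta; case: eqP => [c_j | _]; last by rewrite mul0r.
  by move: c_out; rewrite -c_j ltz_nat ltn_ord.
Qed.

Definition cartan_null (t : cartan_type) (n : nat) (y : int -> int) : Prop :=
  forall k, (k < n)%N -> \sum_(j < n) cartan t n k j * y j = 0.

(* Coefficient vectors are indexed by [int] and vanish outside [0, n), so that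
   the neighbour k - 1 of row 0 needs no special treatment. *)
Section CartanKernel.
Variables (n : nat) (y : int -> int).
Hypothesis y_supp : forall j, ~~ (0 <= j < n%:Z) -> y j = 0.

Lemma sum_sparse_row l : \sum_(j < n) sparse_row l j * y j = sparse_dot l y.
Proof.
under eq_bigr do rewrite /sparse_row mulr_suml.
rewrite exchange_big; apply: eq_bigr => x _.
under eq_bigr do rewrite -mulrA.
rewrite -mulr_sumr sum_delta; case: ifPn => // /y_supp ->.
by rewrite !mulr0.
Qed.

Lemma cartan_null_row t k l : cartan_null t n y -> (k < n)%N ->
  (forall j, (j < n)%N -> cartan t n k j = sparse_row l j) -> sparse_dot l y = 0.
Proof.
move=> null k_lt row_k; rewrite -sum_sparse_row -[RHS](null k k_lt).
by apply: eq_bigr => j _; rewrite row_k.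
Qed.

Lemma cartan_null_chain t m : cartan_null t n y -> (m <= n)%N ->
  (forall k j, (k < m)%N -> cartan t n k j = sparse_row (chain_row k) j) ->
  forall k : nat, (k < m)%N -> sparse_dot (chain_row k) y = 0.
Proof.
move=> null m_le row k k_lt.
by apply: cartan_null_row null (leq_trans k_lt m_le) _ => j _; apply: row.
Qed.

Section Chain.
Variable m : nat.
Hypothesis chain : forall k : nat, (k < m)%N -> sparse_dot (chain_row k) y = 0.

Lemma chain_linear k : -1 <= k <= m%:Z -> y k = (k + 1) * y 0.
Proof.
have y_m1 : y (-1) = 0 by apply: y_supp.
have step k' : (k' <= m)%N -> y k' = (k'%:Z + 1) * y 0 /\ y (k'%:Z - 1) = k'%:Z * y 0.
  elim: k' => [|k' IH] k'_le; first by rewrite y_m1; split; ring.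
  have [yk ykm1] := IH (ltnW k'_le).
  have := chain k'_le; rewrite /sparse_dot !big_cons big_nil /= yk ykm1.
  have -> : k'.+1%:Z = k'%:Z + 1 by lia.
  rewrite addrK yk; split; nia.
move=> /andP [k_ge k_le].
have [-> | k_ge0] : k = -1 \/ 0 <= k by lia.
  by rewrite y_m1; ring.
clear k_ge; case: k k_ge0 k_le => // k _; rewrite lez_nat => k_le.
exact: (step k k_le).1.
Qed.

Lemma vanish_of_chain :
  y 0 = 0 -> (forall j, m%:Z < j < n%:Z -> y j = 0) -> forall j, y j = 0.
Proof.
move=> y0 y_high j.
have [j_low | j_high] := boolP (j <= m%:Z); last first.
  have [j_in | j_out] := boolP (0 <= j < n%:Z); last exact: y_supp.
  by apply: y_high; lia.
have [j_in | j_out] := boolP (0 <= j); last by apply: y_supp; lia.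
by rewrite chain_linear ?y0 ?mulr0 //; lia.
Qed.

End Chain.

Lemma cartan_kernel_A : cartan_null TA n y -> forall j, y j = 0.
Proof.
move=> null.
have chain := cartan_null_chain null (leqnn n) (fun k j _ => cartanA_row n k j).
apply: (vanish_of_chain chain) => [|j]; last by lia.
have y_n : y n = (n%:Z + 1) * y 0 by apply: (chain_linear chain); lia.
by move: y_n; rewrite y_supp; [nia | lia].
Qed.

Lemma cartan_kernel_B : (2 <= n)%N -> cartan_null TB n y -> forall j, y j = 0.
Proof.
move=> n_ge null; have [k n_eq] : exists k, k.+2 = n by exists n.-2; lia.
have chain : forall k', (k' < k.+1)%N -> sparse_dot (chain_row k') y = 0.
  by apply: cartan_null_chain null _ _ => [|k' j k'_lt]; [lia | apply: cartanB_row; lia].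
have last_row : 2 * y (k%:Z + 1) - 2 * y k = 0.
  have k1_lt : (k.+1 < n)%N by lia.
  have := cartan_null_row null k1_lt (fun j j_lt => cartanB_last n_eq j_lt).
  by rewrite /sparse_dot !big_cons big_nil /=; lia.
apply: (vanish_of_chain chain) => [|j]; last by lia.
move: last_row.
by rewrite (chain_linear chain (k := k%:Z + 1)) ?(chain_linear chain (k := k)); lia.
Qed.

Lemma cartan_kernel_C : (2 <= n)%N -> cartan_null TC n y -> forall j, y j = 0.
Proof.
move=> n_ge null; have [k n_eq] : exists k, k.+2 = n by exists n.-2; lia.
have chain : forall k', (k' < k)%N -> sparse_dot (chain_row k') y = 0.
  by apply: cartan_null_chain null _ _ => [|k' j k'_lt]; [lia | apply: cartanC_row; lia].
have double_row : 2 * y k - 2 * y (k%:Z + 1) - y (k%:Z - 1) = 0.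
  have k_lt : (k < n)%N by lia.
  have := cartan_null_row null k_lt (fun j _ => cartanC_double j n_eq).
  by rewrite /sparse_dot !big_cons big_nil /=; lia.
have last_row : 2 * y (k%:Z + 1) - y k = 0.
  have k1_lt : (k.+1 < n)%N by lia.
  have k3_ne : k.+3 != n by lia.
  have := cartan_null_row null k1_lt (fun j _ => cartanC_row j k3_ne).
  rewrite /sparse_dot !big_cons big_nil /=.
  have -> : k.+1%:Z = k%:Z + 1 by lia.
  by rewrite addrK (y_supp (j := k%:Z + 1 + 1)); [lia | rewrite -n_eq; lia].
have [y0 yk1] : y 0 = 0 /\ y (k%:Z + 1) = 0.
  move: double_row last_row.
  by rewrite (chain_linear chain (k := k)) ?(chain_linear chain (k := k%:Z - 1)); nia.
apply: (vanish_of_chain chain) => // j j_range.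
by have -> : j = k%:Z + 1 by lia.
Qed.

Lemma cartan_kernel_D : (4 <= n)%N -> cartan_null TD n y -> forall j, y j = 0.
Proof.
move=> n_ge null; have [k n_eq] : exists k, k.+3 = n by exists (n - 3)%N; lia.
have chain : forall k', (k' < k)%N -> sparse_dot (chain_row k') y = 0.
  by apply: cartan_null_chain null _ _ => [|k' j k'_lt]; [lia | apply: cartanD_row; lia].
have k_lt : (k < n)%N by lia.
have k1_lt : (k.+1 < n)%N by lia.
have k2_lt : (k.+2 < n)%N by lia.
have branch_row := cartan_null_row null k_lt (fun j j_lt => cartanD_branch n_eq j_lt).
have leaf1_row := cartan_null_row null k1_lt (fun j _ => cartanD_leaf1 j n_eq).
have leaf2_row := cartan_null_row null k2_lt (fun j _ => cartanD_leaf2 j n_eq).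
move: branch_row leaf1_row leaf2_row; rewrite /sparse_dot !big_cons !big_nil /=.
rewrite (chain_linear chain (k := k)) ?(chain_linear chain (k := k%:Z - 1)); try lia.
move=> branch_row leaf1_row leaf2_row.
have y0 : y 0 = 0 by nia.
apply: (vanish_of_chain chain) => // j j_range.
move: leaf1_row leaf2_row; rewrite y0 !mulr0 => leaf1_row leaf2_row.
have j_leaf : j = k%:Z + 1 \/ j = k%:Z + 2 by lia.
by case: j_leaf => ->; lia.
Qed.

End CartanKernel.

Lemma cartan_kernel t n (y : int -> int) : valid_type t n ->
  (forall j, ~~ (0 <= j < n%:Z) -> y j = 0) -> cartan_null t n y -> forall j, y j = 0.
Proof.
case: t => /= n_ge y_supp; [exact: cartan_kernel_A | exact: cartan_kernel_B |
  exact: cartan_kernel_C | exact: cartan_kernel_D].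
Qed.

(* [lam - wact t s lam = \sum_j root_coord t s lam j * alpha_j], since s_a lowers
   mu by <mu, alpha_a^vee> alpha_a; the weight coordinates of alpha_j form the
   j-th column of the Cartan matrix. *)
Fixpoint root_coord t n (s : seq 'I_n) (lam : weight n) (j : int) : int :=
  if s is a :: v then root_coord t v lam j + delta j a * wact t v lam a else 0.

Section RootCoordinates.
Variables (t : cartan_type) (n : nat).
Implicit Types (s u : seq 'I_n) (lam : weight n).

Lemma wact_root_coord s lam k :
  wact t s lam k = lam k - \sum_(j < n) cartan t n k j * root_coord t s lam j.
Proof.
elim: s => [|a v IH] /=; first by rewrite big1 ?subr0 // => j _; rewrite mulr0.
rewrite ffunE IH; under [in RHS]eq_bigr do rewrite mulrDr mulrCA.
rewrite big_split /= (sum_delta _ (fun j => cartan t n k `|j|%N * wact t v lam a)).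
rewrite ltz_nat ltn_ord /=; ring.
Qed.

Lemma root_coord_out s lam j : ~~ (0 <= j < n%:Z) -> root_coord t s lam j = 0.
Proof.
move=> j_out; elim: s => [|a v IH] //=; rewrite IH /delta.
case: eqP => [j_a | _]; last by rewrite mul0r addr0.
by move: j_out; rewrite j_a ltz_nat ltn_ord.
Qed.

Lemma root_coord_notin s lam (i : 'I_n) : i \notin s -> root_coord t s lam i = 0.
Proof.
elim: s => [|a v IH] //=; rewrite inE negb_or => /andP [i_a /IH ->].
by rewrite /delta eqz_nat val_eqE (negbTE i_a) mul0r addr0.
Qed.

Lemma root_coord_weq s u lam : valid_type t n -> weq t s u ->
  forall j, root_coord t s lam j = root_coord t u lam j.
Proof.
move=> valid su j; apply/eqP; rewrite -subr_eq0; apply/eqP; move: j.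
apply: (cartan_kernel valid) => [j j_out | k k_lt].
  by rewrite !root_coord_out ?subrr.
have := wact_root_coord s lam (Ordinal k_lt); rewrite su wact_root_coord /=.
move/addrI/oppr_inj => sums_eq.
by under eq_bigr do rewrite mulrBr; rewrite sumrB sums_eq subrr.
Qed.

End RootCoordinates.

Definition minuscule_word t n (Lam : weight n) (u : seq 'I_n) : Prop :=
  forall (p : nat) (Hp : (p < size u)%N),
    (wact t (drop p.+1 u) Lam) (tnth (in_tuple u) (Ordinal Hp)) = 1.

Definition fund_weight n (i : 'I_n) : weight n := [ffun k => (k == i)%:Z].

Section MinusculeWords.
Variables (t : cartan_type) (n : nat).
Implicit Types (s u v : seq 'I_n) (lam Lam : weight n).

Lemma minuscule_word_cons Lam a v :
  minuscule_word t Lam (a :: v) <-> wact t v Lam a = 1 /\ minuscule_word t Lam v.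
Proof.
split=> [Lam_av | [Lam_a Lam_v] [|p] p_lt].
- split; first by have := Lam_av 0%N isT; rewrite (tnth_nth a) /= drop0.
  by move=> p p_lt; have := Lam_av p.+1 p_lt; rewrite !(tnth_nth a).
- by rewrite (tnth_nth a) /= drop0.
- by have := Lam_v p p_lt; rewrite !(tnth_nth a).
Qed.

Lemma root_coord_minuscule Lam u : minuscule_word t Lam u ->
  forall i : 'I_n, root_coord t u Lam i = (count_mem i u)%:Z.
Proof.
elim: u => [|a v IH] //= /minuscule_word_cons [Lam_a /IH {}IH] i.
by rewrite IH Lam_a mulr1 /delta eqz_nat val_eqE eq_sym PoszD addrC.
Qed.

Lemma wactD s (l m : weight n) : wact t s (l + m) = wact t s l + wact t s m.
Proof.
by elim: s => [|a v IH] //=; rewrite IH; apply/ffunP => k; rewrite !ffunE; ring.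
Qed.

Lemma wact_fund_weight s (i : 'I_n) :
  i \notin s -> wact t s (fund_weight i) = fund_weight i.
Proof.
elim: s => [|a v IH] //=; rewrite inE negb_or => /andP [i_a /IH ->].
by apply/ffunP => k; rewrite !ffunE [a == i]eq_sym (negbTE i_a) mul0r subr0.
Qed.

Lemma minuscule_wordD_fund Lam u (i : 'I_n) : i \notin u ->
  minuscule_word t Lam u -> minuscule_word t (Lam + fund_weight i) u.
Proof.
elim: u => [|a v IH] // /[!inE] /norP [i_a i_v] /minuscule_word_cons [Lam_a Lam_v].
apply/minuscule_word_cons; split; last exact: IH.
by rewrite wactD wact_fund_weight // !ffunE Lam_a eq_sym (negbTE i_a) addr0.
Qed.

End MinusculeWords.

Theorem proposition4p2 (t : cartan_type) (n : nat) (ht : valid_type t n)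
  (w : seq 'I_n) (hw : strong_minuscule t w)
  (s : seq 'I_n) (hs : weq t w s) (hred : reduced t s) :
  forall i : 'I_n, (1 <= count_mem i s)%N.
Proof.
move=> i; rewrite lt0n; apply/negP => /eqP /count_memPn i_notin_s.
case: hw => Lam [Lam_dom [u [wu u_red Lam_u]] Lam_unique].
have us : weq t u s by move=> lam; rewrite -wu hs.
have i_notin_u : i \notin u.
  apply/count_memPn/eqP; rewrite -eqz_nat -(root_coord_minuscule Lam_u).
  by rewrite (root_coord_weq _ ht us) root_coord_notin.
have Lam_i_dom : dominant (Lam + fund_weight i).
  by move=> k; rewrite !ffunE addr_ge0.
have Lam_i_min : minuscule t (Lam + fund_weight i) w.
  by exists u; split => //; exact: minuscule_wordD_fund.
have := congr1 (fun f : weight n => f i) (Lam_unique _ Lam_i_dom Lam_i_min).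
by rewrite /= !ffunE eqxx => /eqP; rewrite -subr_eq0 addrC addKr.
Qed.
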